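(* Let $t$, $l$, $n$ be positive integers with $l < t$, and let $y = \left[\frac{t(n-l+1)-l}{t-l}\right]$. Let $\epsilon = 1$ if $y$ is odd and $\epsilon = 0$ otherwise. Then $R_{t-l,t}(K_{1,n}) > y - \epsilon$.
   Context: $[a]$ denotes the integer part (floor) of a real number $a$. $K_{1,n}$ is the star with $n$ edges. For a graph $G$ and integers $1 \leq s < t$, $R_{s,t}(G)$ is the smallest positive integer $N$ such that every coloring of the edges of the complete graph $K_N$ with $t$ colors contains a (not necessarily induced) subgraph isomorphic to $G$ whose edges use at most $s$ distinct colors. *)

From mathcomp Require Import all_boot all_order all_algebra.
Set Implicit Arguments. Unset Strict Implicit. Unset Printing Implicit Defensive.

(* A simple graph is given by a finite vertex type V and a symmetric
   irreflexive edge relation E. *)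

Definition star_rel (n : nat) : rel 'I_n.+1 :=
  fun u v => (u != v) && ((val u == 0) || (val v == 0)).

(* An edge coloring of K_N with t colors: each 2-subset of 'I_N gets a
   color in 'I_t (values on other subsets are irrelevant). *)
Definition edge_coloring (N t : nat) := {ffun {set 'I_N} -> 'I_t}.

Definition has_copy_few_colors (V : finType) (E : rel V) (s N t : nat)
  (c : edge_coloring N t) : Prop :=
  exists f : V -> 'I_N, injective f /\
    #|[set c [set f p.1; f p.2] | p in [set p : V * V | E p.1 p.2]]| <= s.

Definition ramsey_prop (V : finType) (E : rel V) (s t N : nat) : Prop :=
  forall c : edge_coloring N t, has_copy_few_colors E s c.

Definition is_R (V : finType) (E : rel V) (s t N : nat) : Prop :=
  0 < N /\ ramsey_prop E s t N /\
  (forall M, 0 < M -> ramsey_prop E s t M -> N <= M).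

(* For odd m, K_{m+1} on {0..m} has the 1-factorization in which {u,v} gets
   color u+v mod m, or 2(u+v-m) mod m when one endpoint is m; at every vertex
   the m incident edges receive the m distinct colors 0..m-1.  Reducing these
   colors mod t gives a t-coloring of K_N for N <= m+1.  A star with n leaves
   then has n distinct colors below m whose residues mod t lie in a set of at
   most s residues, so n <= s*(m/t) + min(s, m mod t); when
   s*m + t*(t-s) <= t*n this is impossible.  For s = t-l the largest odd m
   allowed is y-1 or y-2 according to the parity of y. *)
From mathcomp Require Import all_boot all_order all_algebra zify.

Lemma modnDr_inj m a b v : a < m -> b < m -> (a + v) %% m = (b + v) %% m -> a = b.
Proof. by move=> am bm /eqP; rewrite eqn_modDr !modn_small // => /eqP. Qed.

Lemma double_modn_inj m a b : odd m -> a < m -> b < m ->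
  (2 * a) %% m = (2 * b) %% m -> a = b.
Proof.
wlog ab : a b / a <= b => [hwlog om am bm e|].
  by case: (leqP a b) => [|/ltnW] h; [apply: hwlog | apply/esym/hwlog].
move=> om am bm /esym/eqP; rewrite eqn_mod_dvd ?leq_mul2l ?ab ?orbT //.
rewrite -mulnBr Gauss_dvdr ?coprimen2 //.
by case: (posnP (b - a)) => [|ba_gt0 /(dvdn_leq ba_gt0)]; lia.
Qed.

Section OneFactorization.

Variable m : nat.
Hypothesis m_odd : odd m.

Definition factor_color (u v : nat) : nat :=
  if (u == m) || (v == m) then (2 * (u + v - m)) %% m else (u + v) %% m.

Lemma factor_color_lt u v : factor_color u v < m.
Proof.
have m_gt0 : 0 < m by case: m m_odd.
by rewrite /factor_color; case: ifP => _; rewrite ltn_pmod.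
Qed.

Lemma factor_color_inj v u u' : v <= m -> u <= m -> u' <= m -> u != v -> u' != v ->
  factor_color v u = factor_color v u' -> u = u'.
Proof.
move=> vm um um' uv uv'; rewrite /factor_color.
have [vE|vN] := eqVneq v m => /=.
  subst v; rewrite !(addnC m) !addnK.
  by apply: double_modn_inj => //; lia.
have [uE|uN] := eqVneq u m; have [uE'|uN'] := eqVneq u' m => //=; try by subst.
- move=> e; subst u; rewrite addnK mul2n -addnn addnC in e.
  by have := @modnDr_inj m v u' v; lia.
- move=> e; subst u'; rewrite addnK mul2n -addnn addnC in e.
  by have := @modnDr_inj m v u v; lia.
- by rewrite ![v + _]addnC; apply: modnDr_inj; lia.
Qed.

End OneFactorization.

Lemma count_mod_mem_block t q L (S : seq nat) : uniq S -> L <= t ->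
  count (fun k => k %% t \in S) (iota (q * t) L) <= minn (size S) L.
Proof.
move=> uS Lt; rewrite -[q * t]addn0 iotaDl count_map.
rewrite (@eq_in_count _ _ (mem S)) => [|k]; last first.
  by rewrite mem_iota add0n /= modnMDl => kL; rewrite modn_small ?(leq_trans kL).
rewrite leq_min -size_filter; apply/andP; split.
  by rewrite uniq_leq_size ?filter_uniq ?iota_uniq // => x; rewrite mem_filter => /andP[].
by rewrite -[X in _ <= X](size_iota 0 L) size_filter count_size.
Qed.

(* The largest number of k < m whose residue mod t lies in a fixed set of s residues. *)
Definition residue_count_bound t s m := s * (m %/ t) + minn s (m %% t).

Lemma residue_count_boundS t s s' m : s <= s' ->
  residue_count_bound t s m <= residue_count_bound t s' m.
Proof.
move=> ss'; rewrite leq_add ?leq_mul //.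
by rewrite leq_min geq_minr andbT (leq_trans (geq_minl _ _) ss').
Qed.

Lemma count_mod_mem t m (S : seq nat) : 0 < t -> uniq S ->
  count (fun k => k %% t \in S) (iota 0 m) <= residue_count_bound t (size S) m.
Proof.
move=> t_gt0 uS; rewrite /residue_count_bound {1}(divn_eq m t) iotaD count_cat add0n.
rewrite leq_add ?count_mod_mem_block // ?(ltnW (ltn_pmod _ _)) //.
elim: (m %/ t) => [|q IH]; first by rewrite muln0.
rewrite mulSnr iotaD count_cat add0n mulnS [size S + _]addnC leq_add //.
exact: leq_trans (count_mod_mem_block t q t S uS (leqnn t)) (geq_minl _ _).
Qed.

Lemma residue_count_bound_lt s t m n : s < t -> s * m + t * (t - s) <= t * n ->
  residue_count_bound t s m < n.
Proof.
move=> st; have t_gt0 : 0 < t by lia.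
rewrite /residue_count_bound {1}(divn_eq m t); have := ltn_pmod m t_gt0.
move: (m %/ t) (m %% t) => q r rt m_bound.
have min_lt : t * minn s r < s * r + t * (t - s).
  have [d tE] : exists d, t = s + d.+1 by exists (t - s).-1; lia.
  rewrite tE addnC addnK; case: (leqP s r) => h.
  - by have := leq_mul (leqnn s) h; nia.
  - have : d.+1 * r < d.+1 * (d.+1 + s) by rewrite ltn_pmul2l // addnC -tE.
    nia.
rewrite -(ltn_pmul2l t_gt0) mulnDr mulnA [t * s]mulnC; lia.
Qed.

Section ModColoring.

Variables (N t : nat) (t_gt0 : 0 < t).

(* A 2-set e = {a, b} determines a + b and whether m is in e, hence its color. *)
Definition pair_color (m : nat) (e : {set 'I_N}) : nat :=
  let s := \sum_(x in e) val x in
  if [exists x in e, val x == m] then (2 * (s - m)) %% m else s %% m.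

Lemma pair_colorE m (a b : 'I_N) : a != b ->
  pair_color m [set a; b] = factor_color m a b.
Proof.
move=> ab; rewrite /pair_color big_setU1 ?in_set1 //= big_set1.
suff -> : [exists x in [set a; b], val x == m] = (val a == m) || (val b == m) by [].
apply/existsP/orP => [[x]|[] h]; last 2 first.
- by exists a; rewrite !inE eqxx h.
- by exists b; rewrite !inE eqxx h orbT.
by rewrite !inE => /andP[/orP[] /eqP-> ->]; [left|right].
Qed.

Definition mod_coloring (m : nat) : edge_coloring N t :=
  [ffun e => Ordinal (ltn_pmod (pair_color m e) t_gt0)].

Definition copy_colors {V : finType} (E : rel V) (c : edge_coloring N t) (f : V -> 'I_N) :=
  [set c [set f p.1; f p.2] | p in [set p : V * V | E p.1 p.2]].

Lemma star_leaves_le {m n} (f : 'I_n.+1 -> 'I_N) : odd m -> N <= m.+1 -> injective f ->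
  n <= residue_count_bound t #|copy_colors (@star_rel n) (mod_coloring m) f| m.
Proof.
move=> m_odd Nm f_inj; set C := copy_colors _ _ f.
pose S := map val (enum C).
have uS : uniq S by rewrite map_inj_uniq ?enum_uniq //; apply: val_inj.
have f_le x : f x <= m by have := ltn_ord (f x); lia.
have f_leaf (i : 'I_n) : f (lift ord0 i) != f ord0.
  by rewrite (inj_eq f_inj) eq_sym neq_lift.
pose g (i : 'I_n) := factor_color m (f ord0) (f (lift ord0 i)).
have g_inj : injective g.
  move=> i j /factor_color_inj; rewrite !f_le !f_leaf => /(_ m_odd isT isT isT isT isT).
  by move/val_inj/f_inj/lift_inj.
have g_col i : g i %% t \in S.
  have inC : mod_coloring m [set f ord0; f (lift ord0 i)] \in C.
    by apply/imsetP; exists (ord0, lift ord0 i); rewrite // inE.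
  by move: inC; rewrite -mem_enum => /(map_f val); rewrite ffunE /= pair_colorE 1?eq_sym ?f_leaf.
have leaves_sub : {subset map g (enum 'I_n) <= filter (fun k => k %% t \in S) (iota 0 m)}.
  by move=> _ /mapP[i _ ->]; rewrite mem_filter mem_iota g_col factor_color_lt.
have leaves_uniq : uniq (map g (enum 'I_n)) by rewrite map_inj_uniq ?enum_uniq.
have := uniq_leq_size leaves_uniq leaves_sub.
rewrite size_map size_enum_ord size_filter => /leq_trans; apply.
by rewrite cardE -(size_map val); apply: count_mod_mem.
Qed.

Lemma mod_coloring_no_star s m n : s < t -> odd m -> N <= m.+1 ->
  s * m + t * (t - s) <= t * n -> ~ has_copy_few_colors (@star_rel n) s (mod_coloring m).
Proof.
move=> st m_odd Nm m_bound [f [f_inj C_le]].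
have := leq_trans (star_leaves_le f m_odd Nm f_inj) (residue_count_boundS _ _ _ m C_le).
by rewrite leqNgt residue_count_bound_lt.
Qed.

End ModColoring.

Lemma exists_odd_between N k : 0 < N -> N + odd k <= k -> exists2 m, odd m & N <= m.+1 <= k.
Proof.
move=> N_gt0 Nk; case N_odd: (odd N); last first.
  by exists N.-1; [rewrite -subn1 oddB // N_odd | lia].
exists N => //; rewrite leqnSn /=.
have : N != k by apply: contraTneq N_odd => NE; move: Nk; rewrite NE; case: (odd k) => /=; lia.
by case: (odd k) Nk; lia.
Qed.

Import Order.TTheory GRing.Theory Num.Theory.
Local Open Scope ring_scope.

Theorem theorem2 (t l n : nat) (ht : (0 < t)%N) (hl : (0 < l)%N) (hn : (0 < n)%N)
  (hlt : (l < t)%N) :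
  let y : int := ((t%:Z * (n%:Z - l%:Z + 1) - l%:Z) %/ (t%:Z - l%:Z))%Z in
  let eps : int := if odd `|y|%N then 1 else 0 in
  forall N : nat, is_R (@star_rel n) (t - l)%N t N -> y - eps < N%:Z.
Proof.
move=> y eps N [N_gt0 [ramsey _]].
have y_le : y * (t%:Z - l%:Z) <= t%:Z * (n%:Z - l%:Z + 1) - l%:Z.
  by apply: lez_floor; apply/eqP; lia.
rewrite /eps ltNge; clear eps; clearbody y; apply/negP => Ny.
case: y y_le Ny => k y_le Ny; last by case: ifP Ny; lia.
have [m m_odd /andP[Nm mk]] : exists2 m, odd m & (N <= m.+1 <= k)%N.
  by apply: exists_odd_between => //; case: (odd k) Ny; lia.
have m_bound : ((t - l) * m + t * (t - (t - l)) <= t * n)%N.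
  have : ((m.+1) * (t - l) <= k * (t - l))%N by rewrite leq_mul2r mk orbT.
  by nia.
have st : (t - l < t)%N by lia.
exact: (mod_coloring_no_star N t ht (t - l) m n st m_odd Nm m_bound (ramsey _)).
Qed.
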